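(* Let $N\ge3$, $\mu\ge0$, assume (K0) and (F0), and let $p>p_S(\alpha)$. There exist $\varepsilon_0>0$ and $C_0>0$ such that for every $\varepsilon\in(0,\varepsilon_0]$ there is $\rho>0$ with the following property: if $\zeta>0$ and $r_1\in(0,\rho)$ satisfy $$|u(r_1,\zeta)-\gamma r_1^{-\theta}|\le\varepsilon r_1^{-\theta}\quad\text{and}\quad |u_r(r_1,\zeta)+\theta\gamma r_1^{-1-\theta}|\le\varepsilon r_1^{-1-\theta},$$ then $r_0(\zeta)>\rho$ and for all $r\in(r_1,\rho]$, $$|u(r,\zeta)-\gamma r^{-\theta}|\le C_0\varepsilon r^{-\theta},\qquad |u_r(r,\zeta)+\theta\gamma r^{-1-\theta}|\le C_0\varepsilon r^{-1-\theta}.$$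
   Context: (K0): $K:(0,\infty)\to(0,\infty)$ is continuous and $K(r)=(k_0+o(1))r^{\alpha}$ as $r\to0$ for some $\alpha>-2$, $k_0>0$. (F0): $f:(0,\infty)\to[0,\infty)$ is continuous, not identically zero, and $f(r)=O(r^{\nu})$ as $r\to0$ for some $\nu>-2$. $p_S(\alpha)=\frac{N+2+2\alpha}{N-2}$, $\theta:=\frac{2+\alpha}{p-1}$, $\gamma:=k_0^{-1/(p-1)}\big(\theta(N-2-\theta)\big)^{1/(p-1)}$. For $\zeta>0$, $u(\cdot,\zeta)$ denotes the regular solution of $u''+\frac{N-1}{r}u'+K(r)\max\{u,0\}^p+\mu f(r)=0$ with $u(0)=\zeta$, i.e. the continuous solution on $[0,\infty)$ of $u(r)=\zeta-\int_0^r\frac{s^{2-N}-r^{2-N}}{N-2}s^{N-1}\big(K(s)\max\{u(s),0\}^p+\mu f(s)\big)ds$; $r_0(\zeta)\in(0,\infty]$ is its first zero ($r_0(\zeta)=\infty$ if $u(\cdot,\zeta)>0$ on $(0,\infty)$). *)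

From Stdlib Require Import Reals Lra.
From Coquelicot Require Import Coquelicot.
Open Scope R_scope.

(* max{x,0}^p for real p (p > 1 in our use), with the convention 0^p = 0. *)
Definition pospow (x p : R) : R :=
  if Rle_dec x 0 then 0 else Rpower x p.

Definition K0 (K : R -> R) (alpha k0 : R) : Prop :=
  (forall r, 0 < r -> 0 < K r) /\
  (forall r, 0 < r -> continuous K r) /\
  alpha > -2 /\ k0 > 0 /\
  filterlim (fun r => K r / Rpower r alpha) (at_right 0) (locally k0).

Definition F0 (f : R -> R) (nu : R) : Prop :=
  (forall r, 0 < r -> 0 <= f r) /\
  (forall r, 0 < r -> continuous f r) /\
  (exists r, 0 < r /\ f r <> 0) /\
  nu > -2 /\
  (exists C delta, 0 < delta /\
     forall r, 0 < r < delta -> Rabs (f r) <= C * Rpower r nu).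

Definition pS (N : nat) (alpha : R) : R := (INR N + 2 + 2 * alpha) / (INR N - 2).
Definition theta (alpha p : R) : R := (2 + alpha) / (p - 1).
Definition gamma (N : nat) (alpha k0 p : R) : R :=
  Rpower k0 (- (1 / (p - 1))) *
  Rpower (theta alpha p * (INR N - 2 - theta alpha p)) (1 / (p - 1)).

Definition kern (N : nat) (K f : R -> R) (mu p : R) (v : R -> R) (r s : R) : R :=
  (/ s ^ (N - 2) - / r ^ (N - 2)) / (INR N - 2) * s ^ (N - 1)
  * (K s * pospow (v s) p + mu * f s).

(* v is the regular solution with v(0) = zeta: continuous on [0,oo) and
   v(r) = zeta - int_0^r kern ds for r > 0 (improper Riemann integral at 0+;
   the integrand is nonnegative and continuous on (0,r]). *)
Definition regular_solution (N : nat) (K f : R -> R) (mu p : R)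
    (v : R -> R) (zeta : R) : Prop :=
  v 0 = zeta /\
  (forall r, 0 <= r ->
     filterlim v (within (fun x => 0 <= x) (locally r)) (locally (v r))) /\
  (forall r, 0 < r ->
     exists I, is_RInt_gen (kern N K f mu p v r) (at_right 0) (at_point r) I
               /\ v r = zeta - I).

(* First zero r0 in (0, oo] of v (p_infty if v has no zero in (0,oo)). *)
Definition first_zero (v : R -> R) : Rbar :=
  Glb_Rbar (fun r => 0 < r /\ v r = 0).

(* In the Emden-Fowler variables [X = r^th u - ga] and [W = r (r^th u)'], the singular
   solution [ga r^(-th)] is the rest point [(0, 0)] and the radial equation becomes the damped
   oscillator [r X' = W], [r W' = - b W - w X + E], with damping [b = N - 2 - 2 th > 0] (this is
   where [p > p_S(alpha)] enters) and stiffness [w = (p - 1) th (N - 2 - th) > 0].  Near [r = 0]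
   the perturbation [E] is at most [delta |X| + eps] for a fixed [delta] depending on [b, w]
   only: it collects the Taylor remainder of [(r^th u)^p] at [ga], the deviation of
   [K(r) r^(-alpha)] from [k0], and [r^(th+2) mu f(r)], which tends to [0].  The quadratic form
   [V = W^2 + b X W + (w + b^2/2) X^2] satisfies [r V' = - b (W^2 + w X^2) + (2 W + b X) E],
   which is negative as soon as [V >= Lam eps^2], so the sublevel set [{V <= Lam eps^2}] traps
   the orbit from [r1] up to [rho].  There [r^th u] stays near [ga], hence [u > 0] (and [u' <= 0]
   below [r1]), and the bound on [V] gives the bounds on [u] and [u']. *)

From Stdlib Require Import Reals Lra Lia Psatz.
From Coquelicot Require Import Coquelicot.
Open Scope R_scope.

(** * Regular solutions solve the radial equation *)

Lemma at_right_ProperFilter' (x : R) : ProperFilter' (at_right x).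
Proof. apply Proper_StrongProper, at_right_proper_filter. Qed.

Lemma at_point_ProperFilter' (x : R) : ProperFilter' (at_point x).
Proof. apply Proper_StrongProper, at_point_filter. Qed.

#[local] Hint Resolve at_right_ProperFilter' at_point_ProperFilter' : core.

Lemma locally_pos (r : R) : 0 < r -> locally r (fun y => 0 < y).
Proof. intros Hr. apply (locally_interval _ r 0 p_infty); simpl; auto. Qed.

Lemma filter_prod_at_right0_at_point (P : R * R -> Prop) (r : R) : 0 < r ->
  (forall a, 0 < a < r -> P (a, r)) ->
  filter_prod (at_right 0) (at_point r) P.
Proof.
  intros Hr H. exists (fun a => 0 < a < r) (fun b => b = r); [| reflexivity |].
  - exists (mkposreal r Hr). intros y Hy Hy0. split; auto.
    unfold ball in Hy; simpl in Hy. unfold AbsRing_ball, abs, minus, plus, opp in Hy; simpl in Hy.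
    apply Rabs_lt_between in Hy. lra.
  - intros a b Ha ->. auto.
Qed.

Lemma filter_prod_at_right0_at_point_pos (P : R -> Prop) (r : R) : 0 < r ->
  (forall x, 0 < x -> P x) ->
  filter_prod (at_right 0) (at_point r)
    (fun ab => forall x, Rmin (fst ab) (snd ab) < x < Rmax (fst ab) (snd ab) -> P x).
Proof.
  intros Hr H. apply filter_prod_at_right0_at_point; auto.
  intros a Ha x [Hx _]. apply H. simpl in Hx. rewrite Rmin_left in Hx; lra.
Qed.

Lemma is_RInt_gen_at_right0_extend (h : R -> R) (r r' l : R) :
  0 < r -> 0 < r' -> (forall s, 0 < s -> continuous h s) ->
  is_RInt_gen h (at_right 0) (at_point r') l ->
  is_RInt_gen h (at_right 0) (at_point r) (l + RInt h r' r).
Proof.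
  intros Hr Hr' Hc H.
  assert (Hex : ex_RInt h r' r).
  { apply (ex_RInt_continuous (V:=R_CompleteNormedModule)). intros z [Hz _]. apply Hc.
    apply Rlt_le_trans with (2 := Hz). apply Rmin_case; auto. }
  apply (RInt_correct (V:=R_CompleteNormedModule)), is_RInt_gen_at_point in Hex.
  exact (is_RInt_gen_Chasles h r' l (RInt h r' r) H Hex).
Qed.

Lemma is_derive_of_RInt_increments (h F : R -> R) :
  (forall s, 0 < s -> continuous h s) ->
  (forall c r, 0 < c -> 0 < r -> F r = F c + RInt h c r) ->
  forall r, 0 < r -> is_derive F r (h r).
Proof.
  intros Hc HF r Hr.
  assert (HD : is_derive (fun y => F (r/2) + RInt h (r/2) y) r (0 + h r)).
  { apply (is_derive_plus (fun _ => F (r/2))).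
    { apply (is_derive_const (K:=R_AbsRing) (V:=R_NormedModule)). }
    apply (is_derive_RInt (V:=R_NormedModule) h _ (r/2) r); [| apply Hc; lra].
    apply (filter_imp (fun y => r/2 < y)).
    - intros y Hy. apply (RInt_correct (V:=R_CompleteNormedModule)).
      apply (ex_RInt_continuous (V:=R_CompleteNormedModule)). intros z [Hz _]. apply Hc.
      apply Rlt_le_trans with (2 := Hz). apply Rmin_case; lra.
    - apply (locally_interval _ r (r/2) p_infty); simpl; auto; lra. }
  rewrite Rplus_0_l in HD.
  apply (is_derive_ext_loc (K:=R_AbsRing) (V:=R_NormedModule)) with (2 := HD).
  apply (filter_imp (fun y => 0 < y)); [| apply locally_pos; auto].
  intros y Hy. symmetry. apply HF; lra.
Qed.

Lemma ex_derive_continuous_R (g : R -> R) (x : R) : ex_derive g x -> continuous g x.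
Proof. apply (ex_derive_continuous (K:=R_AbsRing) (V:=R_NormedModule)). Qed.

Section RadialIntegral.
Variables (m : nat) (G v : R -> R) (zeta : R).
Hypothesis HGc : forall s, 0 < s -> continuous G s.
Hypothesis HGp : forall s, 0 < s -> 0 <= G s.

Let n := S m.
Let kernel (r s : R) := (/ s ^ n - / r ^ n) / INR n * s ^ S n * G s.
Let gL (s : R) := s * G s.
Let gJ (s : R) := s ^ S n * G s.

Hypothesis Hkernel : forall r, 0 < r -> exists I,
  is_RInt_gen (kernel r) (at_right 0) (at_point r) I /\ v r = zeta - I.

Let INR_n_pos : 0 < INR n.
Proof. apply lt_0_INR. unfold n; lia. Qed.

Let weighted_continuous (g : R -> R) s : 0 < s -> ex_derive g s ->
  continuous (fun s => g s * G s) s.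
Proof.
  intros Hs Hg. apply (continuous_mult g G); [apply ex_derive_continuous_R |]; auto.
Qed.

Let kernel_continuous r s : 0 < s -> continuous (kernel r) s.
Proof.
  intros Hs. apply weighted_continuous; auto.
  assert (0 < s ^ m) by (apply pow_lt; lra). auto_derive. unfold n; simpl. nra.
Qed.

Let gL_continuous s : 0 < s -> continuous gL s.
Proof. intros Hs. apply weighted_continuous; auto. auto_derive. auto. Qed.

Let gJ_continuous s : 0 < s -> continuous gJ s.
Proof. intros Hs. apply weighted_continuous; auto. auto_derive. auto. Qed.

(* [kernel r - kernel (2 r) = c gJ] with [c <> 0]: the kernels at two radii isolate the
   moment [s^(n+1) G], which is therefore integrable at [0+]. *)
Let gJ_integrable r : 0 < r -> ex_RInt_gen gJ (at_right 0) (at_point r).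
Proof.
  intros Hr.
  destruct (Hkernel r Hr) as [I1 [H1 _]].
  destruct (Hkernel (2 * r) ltac:(lra)) as [I2 [H2 _]].
  pose proof (is_RInt_gen_at_right0_extend _ r (2 * r) I2 Hr ltac:(lra)
                (kernel_continuous (2 * r)) H2) as H3.
  pose proof (is_RInt_gen_minus (Fa:=at_right 0) (Fb:=at_point r) _ _ _ _ H1 H3) as H4.
  set (c := (/ (2 * r) ^ n - / r ^ n) / INR n).
  assert (Hc : c < 0).
  { assert (0 < r ^ n) by (apply pow_lt; lra).
    assert (r ^ n < (2 * r) ^ n).
    { rewrite Rpow_mult_distr. assert (1 < 2 ^ n) by (apply Rlt_pow_R1; unfold n; lra || lia).
      nra. }
    assert (/ (2 * r) ^ n < / r ^ n) by (apply Rinv_lt_contravar; nra).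
    assert (0 < / INR n) by (apply Rinv_0_lt_compat; auto).
    unfold c, Rdiv. nra. }
  eexists. eapply (is_RInt_gen_ext (Fa:=at_right 0) (Fb:=at_point r)),
    (is_RInt_gen_scal (Fa:=at_right 0) (Fb:=at_point r) _ (/ c) _ H4).
  apply filter_forall. intros _ x _.
  unfold scal, minus, plus, opp; simpl. unfold mult; simpl. unfold kernel, gJ.
  transitivity (/ c * (c * (x ^ S n * G x))); [unfold c, Rdiv; f_equal; ring | field; lra].
Qed.

Let J r := RInt_gen gJ (at_right 0) (at_point r).
Let L r := RInt_gen gL (at_right 0) (at_point r).

Let J_correct r : 0 < r -> is_RInt_gen gJ (at_right 0) (at_point r) (J r).
Proof.
  intros Hr. apply (RInt_gen_correct (V:=R_CompleteNormedModule)), gJ_integrable, Hr.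
Qed.

Let kernel_decomposition r x : 0 < r -> 0 < x ->
  kernel r x = / INR n * (gL x - / r ^ n * gJ x).
Proof.
  intros Hr Hx. unfold kernel, gL, gJ.
  assert (0 < x ^ n) by (apply pow_lt; lra). assert (0 < r ^ n) by (apply pow_lt; lra).
  change (x ^ S n) with (x * x ^ n). field. repeat split; lra.
Qed.

Let L_correct r : 0 < r -> is_RInt_gen gL (at_right 0) (at_point r) (L r).
Proof.
  intros Hr. apply (RInt_gen_correct (V:=R_CompleteNormedModule)); auto.
  destruct (Hkernel r Hr) as [I1 [H1 _]].
  pose proof (is_RInt_gen_scal (Fa:=at_right 0) (Fb:=at_point r) _ (INR n) _ H1) as H2.
  pose proof (is_RInt_gen_scal (Fa:=at_right 0) (Fb:=at_point r) _ (/ r ^ n) _ (J_correct r Hr))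
    as H3.
  eexists. eapply (is_RInt_gen_ext (Fa:=at_right 0) (Fb:=at_point r)),
    (is_RInt_gen_plus (Fa:=at_right 0) (Fb:=at_point r) _ _ _ _ H2 H3).
  apply filter_prod_at_right0_at_point_pos; auto. intros x Hx.
  rewrite kernel_decomposition by auto.
  pose proof INR_n_pos. set (c := INR n) in *. set (e := r ^ n).
  unfold scal, plus; simpl. unfold mult; simpl. assert (0 < e) by (apply pow_lt; lra). field. lra.
Qed.

Let v_representation r : 0 < r -> v r = zeta - (L r - J r / r ^ n) / INR n.
Proof.
  intros Hr. destruct (Hkernel r Hr) as [I [HI ->]]. f_equal.
  apply (is_RInt_gen_unique (V:=R_CompleteNormedModule)) in HI; auto.
  rewrite <- HI. apply (is_RInt_gen_unique (V:=R_CompleteNormedModule)); auto.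
  pose proof (is_RInt_gen_scal (Fa:=at_right 0) (Fb:=at_point r) _ (/ r ^ n) _ (J_correct r Hr))
    as H3.
  pose proof (is_RInt_gen_minus (Fa:=at_right 0) (Fb:=at_point r) _ _ _ _ (L_correct r Hr) H3)
    as H4.
  pose proof (is_RInt_gen_scal (Fa:=at_right 0) (Fb:=at_point r) _ (/ INR n) _ H4) as H5.
  replace ((L r - J r / r ^ n) / INR n) with (scal (/ INR n) (minus (L r) (scal (/ r ^ n) (J r)))).
  2:{ unfold scal, minus, plus, opp; simpl. unfold mult; simpl. unfold Rdiv. ring. }
  eapply (is_RInt_gen_ext (Fa:=at_right 0) (Fb:=at_point r)); [| exact H5].
  apply filter_prod_at_right0_at_point_pos; auto. intros x Hx.
  rewrite kernel_decomposition by auto.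
  set (c := INR n) in *. set (e := r ^ n).
  unfold scal, minus, plus, opp; simpl. unfold mult; simpl. ring.
Qed.

Let RInt_gen_increment (h : R -> R) (F : R -> R) :
  (forall s, 0 < s -> continuous h s) ->
  (forall r, 0 < r -> is_RInt_gen h (at_right 0) (at_point r) (F r)) ->
  forall c r, 0 < c -> 0 < r -> F r = F c + RInt h c r.
Proof.
  intros Hc HF c r Hc0 Hr.
  pose proof (is_RInt_gen_at_right0_extend h r c (F c) Hr Hc0 Hc (HF c Hc0)) as Hext.
  apply (is_RInt_gen_unique (V:=R_CompleteNormedModule)) in Hext; auto.
  rewrite <- Hext. symmetry. apply (is_RInt_gen_unique (V:=R_CompleteNormedModule)); auto.
Qed.

Let J_derive r : 0 < r -> is_derive J r (gJ r).
Proof.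
  apply is_derive_of_RInt_increments; [exact gJ_continuous |].
  exact (RInt_gen_increment gJ J gJ_continuous J_correct).
Qed.

Let L_derive r : 0 < r -> is_derive L r (gL r).
Proof.
  apply is_derive_of_RInt_increments; [exact gL_continuous |].
  exact (RInt_gen_increment gL L gL_continuous L_correct).
Qed.

Let J_nonneg r : 0 < r -> 0 <= J r.
Proof.
  intros Hr.
  assert (norm0 : forall y : R, norm (scal 0 y) = 0).
  { intros y. unfold norm, scal; simpl. unfold abs, mult; simpl. rewrite Rmult_0_l. apply Rabs_R0. }
  rewrite <- (norm0 (J r)).
  apply (RInt_gen_norm (V:=R_CompleteNormedModule) (Fa:=at_right 0) (Fb:=at_point r)
           (fun y => scal 0 (gJ y)) gJ).
  - apply filter_prod_at_right0_at_point; [exact Hr |]. intros a Ha. simpl. lra.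
  - apply filter_prod_at_right0_at_point; [exact Hr |]. intros a Ha x Hx. simpl in Hx.
    rewrite norm0. unfold gJ. apply Rmult_le_pos; [apply pow_le | apply HGp]; lra.
  - exact (is_RInt_gen_scal _ 0 _ (J_correct r Hr)).
  - exact (J_correct r Hr).
Qed.

Lemma radial_integral_ode : exists D : R -> R,
  (forall r, 0 < r -> D r <= 0) /\
  (forall r, 0 < r -> is_derive v r (D r)) /\
  (forall r, 0 < r -> is_derive D r (- G r - INR (S n) * D r / r)).
Proof.
  exists (fun r => - J r / r ^ S n). split; [| split]; intros r Hr.
  - assert (0 < r ^ S n) by (apply pow_lt; lra).
    pose proof (J_nonneg r Hr). unfold Rdiv.
    assert (0 < / r ^ S n) by (apply Rinv_0_lt_compat; lra). nra.
  - apply (is_derive_ext_loc (fun y => zeta - (L y - J y / y ^ n) / INR n)).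
    { apply (filter_imp (fun y => 0 < y)); [| apply locally_pos; auto].
      intros y Hy. symmetry. apply v_representation; auto. }
    assert (eJ : ex_derive J r) by (eexists; apply J_derive; lra).
    assert (eL : ex_derive L r) by (eexists; apply L_derive; lra).
    assert (0 < r ^ m) by (apply pow_lt; lra).
    pose proof INR_n_pos as Hc. set (c := INR n) in *.
    auto_derive; [repeat split; auto; nra |].
    change (Derive (fun x => J x) r) with (Derive J r).
    change (Derive (fun x => L x) r) with (Derive L r).
    rewrite (is_derive_unique _ _ _ (J_derive r Hr)), (is_derive_unique _ _ _ (L_derive r Hr)).
    change (match m with 0%nat => 1 | S _ => INR m + 1 end) with c.
    unfold gL, gJ, n. simpl. field. nra.
  - assert (eJ : ex_derive J r) by (eexists; apply J_derive; lra).
    auto_derive.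
    { repeat split; auto. apply (pow_nonzero r (S (S m))). lra. }
    change (Derive (fun x => J x) r) with (Derive J r).
    rewrite (is_derive_unique _ _ _ (J_derive r Hr)).
    change (match m with 0%nat => 1 | S _ => INR m + 1 end) with (INR n).
    assert (0 < r ^ m) by (apply pow_lt; lra).
    unfold gJ, n. simpl. field. lra.
Qed.
End RadialIntegral.

Lemma pospow_nonneg (x p : R) : 0 <= pospow x p.
Proof. unfold pospow. destruct (Rle_dec x 0); [lra | left; apply exp_pos]. Qed.

Lemma continuity_pt_pospow (p x : R) : 0 < p -> continuity_pt (fun y => pospow y p) x.
Proof.
  intros Hp eps He. unfold pospow.
  destruct (Rtotal_order x 0) as [Hx | [-> | Hx]].
  - exists (- x). split; [lra |]. intros y [_ Hy]. simpl in *. unfold R_dist in *.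
    apply Rabs_def2 in Hy.
    destruct (Rle_dec y 0); [| lra]. destruct (Rle_dec x 0); [| lra].
    rewrite Rminus_diag, Rabs_R0. auto.
  - exists (Rpower eps (/ p)). split; [apply exp_pos |]. intros y [_ Hy]. simpl in *.
    unfold R_dist in *. rewrite Rminus_0_r in Hy.
    destruct (Rle_dec 0 0) as [_ | Hn]; [| lra].
    destruct (Rle_dec y 0) as [| Hy0]; [rewrite Rminus_diag, Rabs_R0; auto |].
    apply Rnot_le_lt in Hy0. rewrite Rminus_0_r, Rabs_right by (left; apply exp_pos).
    rewrite Rabs_right in Hy by lra.
    replace eps with (Rpower (Rpower eps (/ p)) p).
    + apply Rlt_Rpower_l; auto.
    + rewrite Rpower_mult, Rinv_l, Rpower_1; lra.
  - assert (Hc : continuity_pt (fun y => Rpower y p) x).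
    { apply derivable_continuous_pt. exists (p * Rpower x (p - 1)).
      apply derivable_pt_lim_power; auto. }
    destruct (Hc eps He) as [d [Hd Hf]].
    exists (Rmin d x). split; [apply Rmin_case; lra |]. intros y [Hy1 Hy2]. simpl in *.
    unfold R_dist in *. pose proof (Rmin_l d x). pose proof (Rmin_r d x).
    assert (Hyx : Rabs (y - x) < x) by lra. apply Rabs_def2 in Hyx.
    destruct (Rle_dec y 0); [lra |]. destruct (Rle_dec x 0); [lra |].
    apply (Hf y). split; [exact Hy1 | lra].
Qed.

Lemma continuity_pt_of_within_nonneg (v : R -> R) (r : R) : 0 < r ->
  filterlim v (within (fun x => 0 <= x) (locally r)) (locally (v r)) ->
  continuity_pt v r.
Proof.
  intros Hr H. apply continuity_pt_filterlim. intros P HP.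
  specialize (H P HP). unfold filtermap, within in *.
  apply (filter_imp (fun x => (0 <= x -> P (v x)) /\ 0 < x)).
  - intros x [H1 H2]. apply H1; lra.
  - apply filter_and; [exact H | apply locally_pos; auto].
Qed.

Lemma regular_solution_ode (N : nat) (K f : R -> R) (mu p : R) (v : R -> R) (zeta : R) :
  (3 <= N)%nat -> 0 < p -> 0 <= mu ->
  (forall r, 0 < r -> 0 < K r) -> (forall r, 0 < r -> continuous K r) ->
  (forall r, 0 < r -> 0 <= f r) -> (forall r, 0 < r -> continuous f r) ->
  regular_solution N K f mu p v zeta ->
  exists D : R -> R,
    (forall r, 0 < r -> D r <= 0) /\
    (forall r, 0 < r -> is_derive v r (D r)) /\
    (forall r, 0 < r -> is_derive D r
       (- (K r * pospow (v r) p + mu * f r) - (INR N - 1) * D r / r)).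
Proof.
  intros HN Hp Hmu HKpos HKc Hfpos Hfc [_ [Hvc Hkernel]].
  destruct N as [| [| [| m]]]; try (exfalso; lia).
  set (G := fun s => K s * pospow (v s) p + mu * f s).
  replace (INR (S (S (S m))) - 1) with (INR (S (S m))) by (rewrite (S_INR (S (S m))); ring).
  apply (radial_integral_ode m G v zeta).
  - intros s Hs. apply continuity_pt_filterlim. unfold G.
    apply continuity_pt_plus; apply continuity_pt_mult.
    + apply continuity_pt_filterlim, HKc; auto.
    + apply (continuity_pt_comp v (fun y => pospow y p)); [| apply continuity_pt_pospow; auto].
      apply continuity_pt_of_within_nonneg, Hvc; lra.
    + apply continuity_pt_const. intros x y; reflexivity.
    + apply continuity_pt_filterlim, Hfc; auto.
  - intros s Hs. unfold G. pose proof (HKpos s Hs). pose proof (Hfpos s Hs).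
    pose proof (pospow_nonneg (v s) p). nra.
  - intros r Hr. destruct (Hkernel r Hr) as [I [HI Hvr]]. exists I. split; auto.
    eapply (is_RInt_gen_ext (Fa:=at_right 0) (Fb:=at_point r)); [| exact HI].
    apply filter_forall. intros _ x _. unfold kern, G.
    change (S (S (S m)) - 2)%nat with (S m). change (S (S (S m)) - 1)%nat with (S (S m)).
    replace (INR (S (S (S m))) - 2) with (INR (S m)) by (rewrite !S_INR; ring). reflexivity.
Qed.

(** * A barrier lemma *)

Lemma continuity_pt_ball (f : R -> R) (y : R) : continuity_pt f y ->
  forall eps, 0 < eps -> exists d, 0 < d /\ forall z, Rabs (z - y) < d -> Rabs (f z - f y) < eps.
Proof.
  intros Hc eps He. destruct (Hc eps He) as [d [Hd H]].
  exists d. split; auto. intros z Hz.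
  destruct (Req_dec z y) as [-> | Hzy].
  - rewrite Rminus_diag, Rabs_R0. auto.
  - apply (H z). split; [split; [exact I | auto] | exact Hz].
Qed.

Lemma last_point_below (phi : R -> R) (a x0 L : R) :
  (forall y, a <= y <= x0 -> continuity_pt phi y) -> a <= x0 -> phi a <= L -> L < phi x0 ->
  exists c, a <= c < x0 /\ phi c <= L /\ forall y, c < y <= x0 -> L < phi y.
Proof.
  intros Hcont Hax Ha Hx0.
  set (S := fun y => a <= y <= x0 /\ phi y <= L).
  destruct (completeness S) as [c [Hub Hleast]].
  { exists x0. intros y [Hy _]. lra. }
  { exists a. split; [lra | auto]. }
  assert (Hac : a <= c) by (apply Hub; split; [lra | auto]).
  assert (Hcx : c <= x0) by (apply Hleast; intros y [Hy _]; lra).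
  assert (Habove : forall y, c < y <= x0 -> L < phi y).
  { intros y Hy. destruct (Rlt_le_dec L (phi y)) as [| Hn]; auto.
    assert (y <= c) by (apply Hub; split; [lra | auto]). lra. }
  assert (Hc : phi c <= L).
  { destruct (Rle_dec (phi c) L) as [| Hn]; auto. apply Rnot_le_lt in Hn. exfalso.
    destruct (continuity_pt_ball phi c (Hcont c ltac:(lra)) (phi c - L) ltac:(lra))
      as [d [Hd0 Hd]].
    assert (c <= c - d / 2); [| lra].
    apply Hleast. intros y [Hy Hy2].
    assert (y <= c) by (apply Hub; split; auto).
    destruct (Rle_dec y (c - d / 2)); auto.
    assert (Rabs (y - c) < d) by (apply Rabs_def1; lra).
    specialize (Hd y ltac:(assumption)). apply Rabs_def2 in Hd. lra. }
  exists c. repeat split; auto.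
  destruct (Rle_lt_or_eq_dec _ _ Hcx) as [| ->]; [auto | lra].
Qed.

Lemma upper_barrier (phi dphi : R -> R) (a b L : R) :
  0 < L -> (forall x, a <= x <= b -> is_derive phi x (dphi x)) -> phi a <= L ->
  (forall x, a < x <= b -> L <= phi x <= 2 * L -> dphi x <= 0) ->
  forall x, a <= x <= b -> phi x <= L.
Proof.
  intros HL Hd Ha Hneg x0 Hx0.
  destruct (Rle_dec (phi x0) L) as [| Hgt]; auto. exfalso. apply Rnot_le_lt in Hgt.
  assert (Hcont : forall y, a <= y <= b -> continuity_pt phi y).
  { intros y Hy. apply derivable_continuous_pt. exists (dphi y). apply is_derive_Reals, Hd; auto. }
  destruct (last_point_below phi a x0 L) as [c [Hc [Hcl Habove]]]; auto; try lra.
  { intros y Hy. apply Hcont. lra. }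
  destruct (continuity_pt_ball phi c (Hcont c ltac:(lra)) L HL) as [d [Hd0 Hdd]].
  set (x2 := Rmin (c + d / 2) x0).
  assert (Hx2 : c < x2 <= c + d / 2 /\ x2 <= x0).
  { unfold x2. pose proof (Rmin_l (c + d / 2) x0). pose proof (Rmin_r (c + d / 2) x0).
    repeat split; try lra. apply Rmin_case; lra. }
  destruct (MVT_cor2 phi dphi c x2 ltac:(lra)) as [xi [Heq Hxi]].
  { intros y Hy. apply is_derive_Reals, Hd. lra. }
  assert (L < phi xi) by (apply Habove; lra).
  assert (phi xi < 2 * L).
  { assert (Rabs (xi - c) < d) by (apply Rabs_def1; lra).
    specialize (Hdd xi ltac:(assumption)). apply Rabs_def2 in Hdd. lra. }
  assert (dphi xi <= 0) by (apply Hneg; lra).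
  assert (L < phi x2) by (apply Habove; lra).
  nra.
Qed.

(** * A Lyapunov function for the damped oscillator *)

Definition lyap (b w X W : R) : R := W * W + b * X * W + (w + b * b / 2) * (X * X).

Definition lyap_gain (b w : R) : R := b * w / (2 * (1 + b + w)).

Definition lyap_threshold (b w : R) : R :=
  4 * (8 + 2 * (b * b) / w) * (3 / 2 + (w + b * b) / w) / (b * b).

Lemma Rabs_le_of_sqr_le (x y : R) : 0 <= y -> x * x <= y * y -> Rabs x <= y.
Proof.
  intros Hy H. rewrite <- (Rabs_pos_eq y Hy). apply Rsqr_le_abs_0. unfold Rsqr. lra.
Qed.

Lemma Rabs_mul_self (x : R) : Rabs x * Rabs x = x * x.
Proof. rewrite <- Rabs_mult. apply Rabs_pos_eq. nra. Qed.

Lemma lyap_ge_energy (b w X W : R) : 0 <= w -> (W * W + w * (X * X)) / 2 <= lyap b w X W.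
Proof.
  intros Hw. unfold lyap. pose proof (Rle_0_sqr (W + b * X)). pose proof (Rle_0_sqr X).
  unfold Rsqr in *. nra.
Qed.

Lemma lyap_le_sum (b w X W : R) : lyap b w X W <= 3 / 2 * (W * W) + (w + b * b) * (X * X).
Proof. unfold lyap. pose proof (Rle_0_sqr (W - b * X)). unfold Rsqr in *. nra. Qed.

Lemma lyap_le_energy (b w X W : R) : 0 < w ->
  lyap b w X W <= (3 / 2 + (w + b * b) / w) * (W * W + w * (X * X)).
Proof.
  intros Hw. eapply Rle_trans; [apply lyap_le_sum |].
  assert (0 <= (w + b * b) / w * (W * W)).
  { apply Rmult_le_pos; [apply Rdiv_le_0_compat |]; nra. }
  replace ((3 / 2 + (w + b * b) / w) * (W * W + w * (X * X)))
    with (3 / 2 * (W * W) + (w + b * b) / w * (W * W) + 3 / 2 * w * (X * X) + (w + b * b) * (X * X))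
    by (field; lra).
  pose proof (Rle_0_sqr X). unfold Rsqr in *. nra.
Qed.

Lemma lyap_gain_term (b w X W : R) : 0 < b -> 0 < w ->
  lyap_gain b w * (Rabs (2 * W + b * X) * Rabs X) <= b / 2 * (W * W + w * (X * X)).
Proof.
  intros Hb Hw. set (g := lyap_gain b w).
  assert (Hg : g * (1 + b + w) = b * w / 2) by (unfold g, lyap_gain; field; lra).
  assert (Hg0 : 0 < g) by (unfold g, lyap_gain; apply Rdiv_lt_0_compat; nra).
  assert (HAX : Rabs (2 * W + b * X) * Rabs X <= W * W + (1 + b) * (X * X)).
  { assert (Rabs (2 * W + b * X) <= 2 * Rabs W + b * Rabs X).
    { eapply Rle_trans; [apply Rabs_triang |].
      rewrite !Rabs_mult, (Rabs_right 2), (Rabs_right b) by lra. lra. }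
    rewrite <- (Rabs_mul_self W), <- (Rabs_mul_self X).
    pose proof (Rabs_pos X). pose proof (Rle_0_sqr (Rabs W - Rabs X)). unfold Rsqr in *.
    nra. }
  assert (Hgb : g <= b / 2) by nra.
  pose proof (Rle_0_sqr W). pose proof (Rle_0_sqr X). unfold Rsqr in *.
  apply Rle_trans with (g * (W * W + (1 + b) * (X * X))); [apply Rmult_le_compat_l; lra |].
  assert (g * (1 + b) <= b * w / 2) by nra.
  assert (g * (W * W) <= b / 2 * (W * W)) by (apply Rmult_le_compat_r; lra).
  assert (g * (1 + b) * (X * X) <= b * w / 2 * (X * X)) by (apply Rmult_le_compat_r; lra).
  nra.
Qed.

(* The threshold is chosen so that [(2W + bX)^2 eps^2 <= (b^2/4) (W^2 + w X^2)^2] on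
   [{lyap >= threshold * eps^2}]. *)
Lemma lyap_eps_term (b w X W eps : R) : 0 < b -> 0 < w -> 0 <= eps ->
  lyap_threshold b w * (eps * eps) <= lyap b w X W ->
  Rabs (2 * W + b * X) * eps <= b / 2 * (W * W + w * (X * X)).
Proof.
  intros Hb Hw He HV.
  set (D := W * W + w * (X * X)). set (c := 3 / 2 + (w + b * b) / w).
  set (c7 := 8 + 2 * (b * b) / w). set (A := 2 * W + b * X).
  assert (HD : 0 <= D).
  { unfold D. pose proof (Rle_0_sqr W). pose proof (Rle_0_sqr X). unfold Rsqr in *. nra. }
  assert (Hc : 0 < c).
  { unfold c. assert (0 <= (w + b * b) / w) by (apply Rdiv_le_0_compat; nra). lra. }
  assert (Hc7 : 0 < c7).
  { unfold c7. assert (0 <= 2 * (b * b) / w) by (apply Rdiv_le_0_compat; nra). lra. }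
  assert (HA : A * A <= c7 * D).
  { unfold A, c7, D.
    replace ((8 + 2 * (b * b) / w) * (W * W + w * (X * X)))
      with (8 * (W * W) + 8 * w * (X * X) + 2 * (b * b) / w * (W * W) + 2 * (b * b) * (X * X))
      by (field; lra).
    assert (0 <= 2 * (b * b) / w * (W * W))
      by (apply Rmult_le_pos; [apply Rdiv_le_0_compat |]; nra).
    pose proof (Rle_0_sqr (2 * W - b * X)). unfold Rsqr in *. nra. }
  assert (Heps : 4 * c7 * (eps * eps) <= b * b * D).
  { assert (Hth : lyap_threshold b w * (b * b) = 4 * c7 * c)
      by (unfold lyap_threshold; fold c c7; field; lra).
    pose proof (lyap_le_energy b w X W Hw). fold c D in H.
    apply Rmult_le_reg_l with c; [lra |]. nra. }
  rewrite <- (Rabs_pos_eq eps He), <- Rabs_mult.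
  apply Rabs_le_of_sqr_le; [nra |].
  assert (A * A * (eps * eps) <= c7 * D * (eps * eps)) by (apply Rmult_le_compat_r; nra).
  assert (c7 * (eps * eps) * D <= b * b * D / 4 * D) by (apply Rmult_le_compat_r; nra).
  nra.
Qed.

Lemma lyap_dissipation (b w X W E eps : R) : 0 < b -> 0 < w -> 0 <= eps ->
  lyap_threshold b w * (eps * eps) <= lyap b w X W ->
  Rabs E <= lyap_gain b w * Rabs X + eps ->
  - b * (W * W + w * (X * X)) + (2 * W + b * X) * E <= 0.
Proof.
  intros Hb Hw He HV HE.
  pose proof (lyap_gain_term b w X W Hb Hw). pose proof (lyap_eps_term b w X W eps Hb Hw He HV).
  assert ((2 * W + b * X) * E <= Rabs (2 * W + b * X) * (lyap_gain b w * Rabs X + eps)).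
  { eapply Rle_trans; [apply Rle_abs |]. rewrite Rabs_mult.
    apply Rmult_le_compat_l; [apply Rabs_pos | exact HE]. }
  nra.
Qed.

Lemma lyap_sublevel_bound (b w X W L eps : R) : 0 < w -> 0 <= L -> 0 <= eps ->
  lyap b w X W <= L * (eps * eps) ->
  Rabs X <= (1 + 2 * L / w + 2 * L) * eps /\ Rabs W <= (1 + 2 * L / w + 2 * L) * eps.
Proof.
  intros Hw HL He HV. pose proof (lyap_ge_energy b w X W ltac:(lra)).
  set (K := 1 + 2 * L / w + 2 * L).
  assert (HLw : 0 <= 2 * L / w) by (apply Rdiv_le_0_compat; lra).
  assert (HK : K * (eps * eps) <= K * eps * (K * eps)).
  { replace (K * eps * (K * eps)) with (K * K * (eps * eps)) by ring.
    apply Rmult_le_compat_r; [nra | unfold K; nra]. }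
  assert (HK0 : 0 <= K * eps) by (apply Rmult_le_pos; unfold K; lra).
  pose proof (Rle_0_sqr W). pose proof (Rle_0_sqr X). unfold Rsqr in *.
  split; apply Rabs_le_of_sqr_le; auto.
  - assert (X * X <= 2 * L / w * (eps * eps)).
    { unfold Rdiv. rewrite Rmult_assoc. apply Rmult_le_reg_l with w; [lra |].
      field_simplify; lra. }
    assert (2 * L / w * (eps * eps) <= K * (eps * eps)) by (apply Rmult_le_compat_r; unfold K; nra).
    lra.
  - assert (2 * L * (eps * eps) <= K * (eps * eps)) by (apply Rmult_le_compat_r; unfold K; nra).
    nra.
Qed.

Lemma lyap_small (b w X W L eps d : R) : 0 < w -> 0 <= d ->
  lyap b w X W <= 2 * (L * (eps * eps)) -> 4 * L * (eps * eps) <= w * (d * d) -> Rabs X <= d.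
Proof.
  intros Hw Hd HV Hsmall. pose proof (lyap_ge_energy b w X W ltac:(lra)).
  apply Rabs_le_of_sqr_le; [lra |].
  pose proof (Rle_0_sqr W). unfold Rsqr in *. nra.
Qed.

Lemma is_derive_lyap (b w : R) (X W : R -> R) (r dx dw : R) :
  is_derive X r dx -> is_derive W r dw ->
  is_derive (fun x => lyap b w (X x) (W x)) r
    ((2 * W r + b * X r) * dw + (b * W r + (2 * w + b * b) * X r) * dx).
Proof.
  intros HX HW. unfold lyap.
  assert (eX : ex_derive X r) by (exists dx; auto).
  assert (eW : ex_derive W r) by (exists dw; auto).
  auto_derive; [repeat split; auto |].
  change (Derive (fun x => X x) r) with (Derive X r).
  change (Derive (fun x => W x) r) with (Derive W r).
  rewrite (is_derive_unique X r dx HX), (is_derive_unique W r dw HW). field.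
Qed.

(** * Stability of the singular solution *)

Lemma Rpower_first_order (g p d : R) : 0 < g -> 0 < d ->
  exists eta, 0 < eta /\ forall Y, Rabs Y < eta ->
    Rabs (Rpower (g + Y) p - Rpower g p - p * Rpower g (p - 1) * Y) <= d * Rabs Y.
Proof.
  intros Hg Hd. destruct (derivable_pt_lim_power g p Hg d Hd) as [eta Heta].
  exists eta. split; [apply cond_pos |]. intros Y HY.
  destruct (Req_dec Y 0) as [-> | HY0].
  - rewrite Rplus_0_r, Rabs_R0. replace (_ - _ - _) with 0 by ring. rewrite Rabs_R0. lra.
  - specialize (Heta Y HY0 HY).
    replace (Rpower (g + Y) p - Rpower g p - p * Rpower g (p - 1) * Y)
      with (Y * ((Rpower (g + Y) p - Rpower g p) / Y - p * Rpower g (p - 1))) by (field; auto).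
    rewrite Rabs_mult, Rmult_comm. apply Rmult_le_compat_r; [apply Rabs_pos | lra].
Qed.

Lemma Rpower_mul_opp (x e : R) : 0 < x -> Rpower x e * Rpower x (- e) = 1.
Proof. intros Hx. rewrite Rpower_Ropp. apply Rinv_r, Rgt_not_eq, exp_pos. Qed.

Lemma Rabs_sub_Rpower_scaled (x t y g c : R) : 0 < x ->
  Rabs (y - g * Rpower x (- t)) <= c * Rpower x (- t) <-> Rabs (Rpower x t * y - g) <= c.
Proof.
  intros Hx. pose proof (Rpower_mul_opp x t Hx) as Hinv. pose proof (exp_pos (- t * ln x)) as Hpos.
  change (exp (- t * ln x)) with (Rpower x (- t)) in Hpos.
  assert (Heq : y - g * Rpower x (- t) = Rpower x (- t) * (Rpower x t * y - g)).
  { rewrite Rmult_minus_distr_l, <- Rmult_assoc, (Rmult_comm (Rpower x (- t))), Hinv. ring. }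
  rewrite Heq.
  rewrite Rabs_mult, (Rabs_pos_eq (Rpower x (- t))), (Rmult_comm c) by lra.
  split; intros H; [apply Rmult_le_reg_l with (Rpower x (- t)) | apply Rmult_le_compat_l]; lra.
Qed.

Lemma pos_of_nonincreasing (v D : R -> R) (r1 : R) :
  (forall x, 0 < x -> is_derive v x (D x)) -> (forall x, 0 < x -> D x <= 0) ->
  0 < v r1 -> forall y, 0 < y <= r1 -> 0 < v y.
Proof.
  intros Hv HD Hr1 y [Hy Hyr].
  destruct (Rle_lt_or_eq_dec _ _ Hyr) as [Hlt | ->]; [| exact Hr1].
  destruct (MVT_cor2 v D y r1 Hlt) as [c [Heq Hc]].
  { intros c Hc. apply is_derive_Reals, Hv. lra. }
  assert (D c <= 0) by (apply HD; lra). nra.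
Qed.

Lemma first_zero_gt (v : R -> R) (rho R : R) : rho < R ->
  (forall y, 0 < y <= R -> 0 < v y) -> Rbar_lt rho (first_zero v).
Proof.
  intros HR Hpos. unfold first_zero.
  apply Rbar_lt_le_trans with R; [exact HR |].
  apply (proj2 (Glb_Rbar_correct _)). intros y [Hy0 Hy1]. simpl.
  destruct (Rle_dec y R) as [Hle | Hgt]; [| lra].
  pose proof (Hpos y (conj Hy0 Hle)). lra.
Qed.

Lemma is_derive_Rpower_mul (e : R) (f : R -> R) (x df : R) : 0 < x -> is_derive f x df ->
  is_derive (fun y => Rpower y e * f y) x ((e * (Rpower x e * f x) + Rpower x (e + 1) * df) / x).
Proof.
  intros Hx Hf.
  assert (H : is_derive (fun y => Rpower y e * f y) x
                (e * Rpower x (e - 1) * f x + Rpower x e * df)).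
  { apply is_derive_Reals, (derivable_pt_lim_mult (fun y => Rpower y e) f).
    - apply derivable_pt_lim_power; auto.
    - apply is_derive_Reals; auto. }
  replace ((e * (Rpower x e * f x) + Rpower x (e + 1) * df) / x)
    with (e * Rpower x (e - 1) * f x + Rpower x e * df); [exact H |].
  unfold Rminus. rewrite !Rpower_plus, Rpower_Ropp, Rpower_1 by lra. field. lra.
Qed.

Section Stability.
Variables (d0 th p k0 ga : R).
Hypothesis Hth : 0 < th.
Hypothesis Hsuper : 2 * th < d0.
Hypothesis Hp : 1 < p.
Hypothesis Hk0 : 0 < k0.
Hypothesis Hga : 0 < ga.
Hypothesis Hgamma : k0 * Rpower ga (p - 1) = th * (d0 - th).

Let b := d0 - 2 * th.
Let w := (p - 1) * th * (d0 - th).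
(* [Lam] exceeds the dissipation threshold and bounds [lyap] at [r1], where
   [|X| <= eps] and [|W| <= (th + 1) eps]. *)
Let Lam := lyap_threshold b w + 3 / 2 * ((th + 1) * (th + 1)) + w + b * b.

Let b_pos : 0 < b.
Proof. unfold b. lra. Qed.

Let w_pos : 0 < w.
Proof. unfold w. apply Rmult_lt_0_compat; [apply Rmult_lt_0_compat |]; lra. Qed.

Let threshold_pos : 0 < lyap_threshold b w.
Proof.
  pose proof b_pos. pose proof w_pos. unfold lyap_threshold.
  assert (0 <= 2 * (b * b) / w) by (apply Rdiv_le_0_compat; nra).
  assert (0 <= (w + b * b) / w) by (apply Rdiv_le_0_compat; nra).
  apply Rdiv_lt_0_compat; nra.
Qed.

Let Lam_pos : 0 < Lam.
Proof. pose proof threshold_pos. pose proof w_pos. unfold Lam. nra. Qed.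

Let scale := Rmin 1 (w / (4 * Lam)).

Let scale_pos : 0 < scale.
Proof.
  pose proof w_pos. pose proof Lam_pos. unfold scale.
  apply Rmin_case; [lra | apply Rdiv_lt_0_compat; lra].
Qed.

Let lyap_small_scale (delta eps : R) : 0 < delta -> 0 < eps <= delta * scale ->
  4 * Lam * (eps * eps) <= w * (delta * delta).
Proof.
  intros Hd [He He0]. pose proof w_pos. pose proof Lam_pos. pose proof scale_pos.
  assert (Hs1 : scale <= 1) by apply Rmin_l.
  assert (Hsw : 4 * Lam * scale <= w).
  { apply Rmult_le_reg_r with (/ (4 * Lam)); [apply Rinv_0_lt_compat; lra |].
    rewrite Rinv_r_simpl_m by lra. apply Rmin_r. }
  assert (Heps2 : eps * eps <= delta * delta * scale).
  { apply Rle_trans with (delta * scale * (delta * scale)); [nra |].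
    replace (delta * delta * scale) with (delta * scale * (delta * 1)) by ring.
    apply Rmult_le_compat_l; nra. }
  apply Rle_trans with (4 * Lam * scale * (delta * delta)); [nra |].
  apply Rmult_le_compat_r; nra.
Qed.

Definition ef_X (v : R -> R) (x : R) : R := Rpower x th * v x - ga.

Definition ef_W (v D : R -> R) (x : R) : R :=
  th * (Rpower x th * v x) + Rpower x (th + 1) * D x.

Definition ef_E (v G : R -> R) (x : R) : R :=
  p * th * (d0 - th) * ef_X v x + th * (d0 - th) * ga - Rpower x (th + 2) * G x.

Lemma ef_E_taylor (v G : R -> R) (eta eps x : R) :
  (forall Y, Rabs Y < eta ->
     Rabs (Rpower (ga + Y) p - Rpower ga p - p * Rpower ga (p - 1) * Y)
       <= lyap_gain b w / k0 * Rabs Y) ->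
  Rabs (ef_X v x) < eta ->
  Rabs (Rpower x (th + 2) * G x - k0 * Rpower (Rpower x th * v x) p) <= eps ->
  Rabs (ef_E v G x) <= lyap_gain b w * Rabs (ef_X v x) + eps.
Proof.
  intros Htaylor HX HG. specialize (Htaylor _ HX).
  replace (ga + ef_X v x) with (Rpower x th * v x) in Htaylor by (unfold ef_X; ring).
  set (T := Rpower (Rpower x th * v x) p - Rpower ga p - p * Rpower ga (p - 1) * ef_X v x) in *.
  set (F := Rpower x (th + 2) * G x - k0 * Rpower (Rpower x th * v x) p) in *.
  assert (Hgap : Rpower ga p = Rpower ga (p - 1) * ga).
  { replace p with (p - 1 + 1) at 1 by ring. rewrite Rpower_plus, Rpower_1; lra. }
  assert (HE : ef_E v G x = - (k0 * T) - F).
  { unfold ef_E, T, F. replace (p * th * (d0 - th)) with (p * (th * (d0 - th))) by ring.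
    rewrite Hgap, <- Hgamma. ring. }
  rewrite HE. unfold Rminus. eapply Rle_trans; [apply Rabs_triang |].
  rewrite !Rabs_Ropp, Rabs_mult, (Rabs_pos_eq k0) by lra.
  apply Rmult_le_compat_l with (r := k0) in Htaylor; [| lra].
  replace (k0 * (lyap_gain b w / k0 * Rabs (ef_X v x))) with (lyap_gain b w * Rabs (ef_X v x))
    in Htaylor by (field; lra).
  lra.
Qed.

Section Orbit.
Variables (v D G : R -> R).
Hypothesis Hv : forall x, 0 < x -> is_derive v x (D x).
Hypothesis HD : forall x, 0 < x -> is_derive D x (- G x - (d0 + 1) * D x / x).

Let X := ef_X v.
Let W := ef_W v D.
Let E := ef_E v G.
Let V (x : R) := lyap b w (X x) (W x).

Let X_derive x : 0 < x -> is_derive X x (W x / x).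
Proof.
  intros Hx. unfold X, W, ef_X, ef_W.
  replace (_ / x) with ((th * (Rpower x th * v x) + Rpower x (th + 1) * D x) / x - 0) by ring.
  apply (is_derive_minus (fun y => Rpower y th * v y) (fun _ => ga)).
  - apply is_derive_Rpower_mul; auto.
  - apply (is_derive_const (K:=R_AbsRing) (V:=R_NormedModule)).
Qed.

Let W_derive x : 0 < x -> is_derive W x ((- b * W x - w * X x + E x) / x).
Proof.
  intros Hx. unfold X, W, E, ef_X, ef_W, ef_E, b, w.
  assert (HP := is_derive_Rpower_mul th v x (D x) Hx (Hv x Hx)).
  assert (HQ := is_derive_Rpower_mul (th + 1) D x _ Hx (HD x Hx)).
  assert (HW := is_derive_plus _ _ x _ _ (is_derive_scal _ x th _ HP) HQ).
  assert (Hpow : Rpower x (th + 1 + 1) = Rpower x (th + 1) * x)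
    by (rewrite Rpower_plus, Rpower_1; lra).
  assert (Hpow2 : Rpower x (th + 2) = Rpower x (th + 1) * x)
    by (rewrite <- Hpow; f_equal; ring).
  revert HW.
  match goal with |- is_derive _ _ ?l -> is_derive _ _ ?l' => replace l' with l end; [auto |].
  unfold plus, scal; simpl; unfold mult; simpl. rewrite Hpow, Hpow2. unfold ef_X. field. lra.
Qed.

Let lyap_orbit_derive x : 0 < x ->
  is_derive V x ((- b * (W x * W x + w * (X x * X x)) + (2 * W x + b * X x) * E x) / x).
Proof.
  intros Hx. pose proof (is_derive_lyap b w X W x _ _ (X_derive x Hx) (W_derive x Hx)) as H.
  match goal with H : is_derive _ _ ?l |- is_derive _ _ ?l' => replace l' with l end; [exact H |].
  field. lra.
Qed.

Lemma orbit_trapped (eps r1 R : R) : 0 < eps -> 0 < r1 ->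
  V r1 <= Lam * (eps * eps) ->
  (forall x, r1 < x <= R -> V x <= 2 * (Lam * (eps * eps)) ->
     Rabs (E x) <= lyap_gain b w * Rabs (X x) + eps) ->
  forall x, r1 <= x <= R -> V x <= Lam * (eps * eps).
Proof.
  intros He Hr1 HV1 HE.
  apply (upper_barrier V
    (fun x => (- b * (W x * W x + w * (X x * X x)) + (2 * W x + b * X x) * E x) / x) r1 R); auto.
  - apply Rmult_lt_0_compat; [exact Lam_pos | nra].
  - intros x Hx. apply lyap_orbit_derive. lra.
  - intros x Hx [HVlo HVhi].
    assert (HVthr : lyap_threshold b w * (eps * eps) <= V x) by (unfold Lam in HVlo; nra).
    pose proof (lyap_dissipation b w (X x) (W x) (E x) eps b_pos w_pos ltac:(lra) HVthr
                  (HE x Hx HVhi)).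
    unfold Rdiv. assert (0 < / x) by (apply Rinv_0_lt_compat; lra). nra.
Qed.

Let X_bound_iff x c : 0 < x ->
  Rabs (v x - ga * Rpower x (- th)) <= c * Rpower x (- th) <-> Rabs (X x) <= c.
Proof. intros Hx. apply Rabs_sub_Rpower_scaled. exact Hx. Qed.

Let W_bound_iff x c : 0 < x ->
  Rabs (D x + th * ga * Rpower x (-1 - th)) <= c * Rpower x (-1 - th) <->
  Rabs (W x - th * X x) <= c.
Proof.
  intros Hx. replace (-1 - th) with (- (th + 1)) by ring.
  replace (D x + th * ga * Rpower x (- (th + 1))) with (D x - - (th * ga) * Rpower x (- (th + 1)))
    by ring.
  replace (W x - th * X x) with (Rpower x (th + 1) * D x - - (th * ga))
    by (unfold W, X, ef_W, ef_X; ring).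
  apply Rabs_sub_Rpower_scaled. exact Hx.
Qed.

Lemma orbit_initial (eps r1 : R) : 0 < r1 -> 0 <= eps ->
  Rabs (v r1 - ga * Rpower r1 (- th)) <= eps * Rpower r1 (- th) ->
  Rabs (D r1 + th * ga * Rpower r1 (-1 - th)) <= eps * Rpower r1 (-1 - th) ->
  V r1 <= Lam * (eps * eps).
Proof.
  intros Hr1 He HX HW. apply X_bound_iff in HX; auto. apply W_bound_iff in HW; auto.
  assert (HW' : Rabs (W r1) <= (th + 1) * eps).
  { replace (W r1) with (th * X r1 + (W r1 - th * X r1)) by ring.
    eapply Rle_trans; [apply Rabs_triang |]. rewrite Rabs_mult, (Rabs_pos_eq th) by lra. nra. }
  assert (HX2 : X r1 * X r1 <= eps * eps).
  { rewrite <- Rabs_mul_self. pose proof (Rabs_pos (X r1)). nra. }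
  assert (HW2 : W r1 * W r1 <= (th + 1) * (th + 1) * (eps * eps)).
  { rewrite <- Rabs_mul_self. pose proof (Rabs_pos (W r1)). nra. }
  pose proof (lyap_le_sum b w (X r1) (W r1)). pose proof threshold_pos. pose proof b_pos.
  assert ((w + b * b) * (X r1 * X r1) <= (w + b * b) * (eps * eps))
    by (apply Rmult_le_compat_l; [pose proof w_pos; nra | lra]).
  unfold V, Lam. nra.
Qed.

Lemma orbit_bounds (eps x : R) : 0 < x -> 0 <= eps -> V x <= Lam * (eps * eps) ->
  Rabs (v x - ga * Rpower x (- th))
    <= (1 + th) * (1 + 2 * Lam / w + 2 * Lam) * eps * Rpower x (- th) /\
  Rabs (D x + th * ga * Rpower x (-1 - th))
    <= (1 + th) * (1 + 2 * Lam / w + 2 * Lam) * eps * Rpower x (-1 - th).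
Proof.
  intros Hx He HV.
  destruct (lyap_sublevel_bound b w (X x) (W x) Lam eps w_pos ltac:(pose proof Lam_pos; lra) He HV)
    as [HX HW].
  set (K := 1 + 2 * Lam / w + 2 * Lam) in *.
  assert (HK : 0 <= K * eps).
  { apply Rmult_le_pos; [| exact He]. unfold K.
    assert (0 <= 2 * Lam / w) by (apply Rdiv_le_0_compat; [pose proof Lam_pos; lra | exact w_pos]).
    pose proof Lam_pos. lra. }
  split; [apply (proj2 (X_bound_iff x _ Hx)) | apply (proj2 (W_bound_iff x _ Hx))].
  - nra.
  - unfold Rminus. eapply Rle_trans; [apply Rabs_triang |].
    rewrite Rabs_Ropp, Rabs_mult, (Rabs_pos_eq th) by lra. nra.
Qed.

Lemma orbit_stays_close (eta delta eps r1 R : R) :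
  (forall Y, Rabs Y < eta ->
     Rabs (Rpower (ga + Y) p - Rpower ga p - p * Rpower ga (p - 1) * Y)
       <= lyap_gain b w / k0 * Rabs Y) ->
  0 < delta < eta -> delta <= ga / 2 -> 0 < eps -> 0 < r1 ->
  4 * Lam * (eps * eps) <= w * (delta * delta) ->
  (forall x, 0 < x <= R -> ga / 2 <= Rpower x th * v x <= 3 * ga / 2 ->
     Rabs (Rpower x (th + 2) * G x - k0 * Rpower (Rpower x th * v x) p) <= eps) ->
  V r1 <= Lam * (eps * eps) ->
  forall x, r1 <= x <= R -> V x <= Lam * (eps * eps) /\ Rabs (X x) <= delta.
Proof.
  intros Htaylor Hdelta Hdga He Hr1 Hscale HG HV1. pose proof w_pos. pose proof Lam_pos.
  assert (Hsmall : forall x, V x <= 2 * (Lam * (eps * eps)) -> Rabs (X x) <= delta).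
  { intros x Hx.
    apply (lyap_small b w _ (W x) Lam eps delta); [lra | lra | exact Hx | exact Hscale]. }
  assert (HV : forall x, r1 <= x <= R -> V x <= Lam * (eps * eps)).
  { apply orbit_trapped; auto. intros x Hx HVx. specialize (Hsmall x HVx). unfold X in Hsmall.
    apply (ef_E_taylor v G eta); [exact Htaylor | lra |].
    apply HG; [lra |]. unfold ef_X in Hsmall. apply Rabs_le_between in Hsmall. lra. }
  intros x Hx. split; [auto |]. apply Hsmall. pose proof (HV x Hx). nra.
Qed.

Lemma orbit_pos (x : R) : 0 < x -> Rabs (X x) <= ga / 2 -> 0 < v x.
Proof.
  intros Hx HX. unfold X, ef_X in HX. apply Rabs_le_between in HX.
  pose proof (exp_pos (th * ln x)). change (exp (th * ln x)) with (Rpower x th) in *. nra.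
Qed.
End Orbit.

Lemma emden_fowler_stability : exists eps0 C0, 0 < eps0 /\ 0 < C0 /\
  forall eps, 0 < eps <= eps0 -> forall (v D G : R -> R) (r1 R : R), 0 < r1 < R ->
  (forall x, 0 < x -> is_derive v x (D x)) ->
  (forall x, 0 < x -> is_derive D x (- G x - (d0 + 1) * D x / x)) ->
  (forall x, 0 < x -> D x <= 0) ->
  (forall x, 0 < x <= R -> ga / 2 <= Rpower x th * v x <= 3 * ga / 2 ->
     Rabs (Rpower x (th + 2) * G x - k0 * Rpower (Rpower x th * v x) p) <= eps) ->
  Rabs (v r1 - ga * Rpower r1 (- th)) <= eps * Rpower r1 (- th) ->
  Rabs (D r1 + th * ga * Rpower r1 (-1 - th)) <= eps * Rpower r1 (-1 - th) ->
  (forall x, 0 < x <= R -> 0 < v x) /\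
  forall x, r1 < x <= R ->
    Rabs (v x - ga * Rpower x (- th)) <= C0 * eps * Rpower x (- th) /\
    Rabs (D x + th * ga * Rpower x (-1 - th)) <= C0 * eps * Rpower x (-1 - th).
Proof.
  pose proof b_pos as Hb. pose proof w_pos as Hw. pose proof Lam_pos as HLam.
  assert (Hgain : 0 < lyap_gain b w / k0).
  { unfold lyap_gain. apply Rdiv_lt_0_compat; [apply Rdiv_lt_0_compat; nra | lra]. }
  destruct (Rpower_first_order ga p _ Hga Hgain) as [eta [Heta Htaylor]].
  set (delta := Rmin (eta / 2) (ga / 2)).
  assert (Hdelta : 0 < delta < eta /\ delta <= ga / 2).
  { unfold delta. pose proof (Rmin_l (eta / 2) (ga / 2)). pose proof (Rmin_r (eta / 2) (ga / 2)).
    repeat split; try lra. apply Rmin_case; lra. }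
  exists (delta * scale), ((1 + th) * (1 + 2 * Lam / w + 2 * Lam)).
  pose proof scale_pos. assert (0 <= 2 * Lam / w) by (apply Rdiv_le_0_compat; lra).
  split; [nra | split; [nra |]].
  intros eps Heps v D G r1 R [Hr1 HR] Hv HD HDneg HG H1 H2.
  assert (Hclose := orbit_stays_close v D G Hv HD eta delta eps r1 R Htaylor ltac:(lra) ltac:(lra)
    ltac:(lra) Hr1 (lyap_small_scale delta eps ltac:(lra) Heps) HG
    (orbit_initial v D eps r1 Hr1 ltac:(lra) H1 H2)).
  split.
  - assert (Hpos : forall x, r1 <= x <= R -> 0 < v x).
    { intros x Hx. apply (orbit_pos v x); [lra |]. pose proof (Hclose x Hx). lra. }
    intros x Hx. destruct (Rle_dec r1 x).
    + apply Hpos. lra.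
    + apply (pos_of_nonincreasing v D r1 Hv HDneg (Hpos r1 ltac:(lra))). lra.
  - intros x Hx. apply orbit_bounds; [lra | lra |]. apply Hclose. lra.
Qed.
End Stability.

Lemma supercritical_exponent (N : nat) (alpha p : R) : (3 <= N)%nat -> alpha > -2 ->
  p > pS N alpha -> 1 < p /\ 0 < theta alpha p /\ 2 * theta alpha p < INR N - 2.
Proof.
  intros HN Hal Hp. unfold pS in Hp. unfold theta.
  assert (Hd : 1 <= INR N - 2) by (apply le_INR in HN; simpl in HN; lra).
  apply Rmult_gt_compat_r with (r := INR N - 2) in Hp; [| lra].
  unfold Rdiv in Hp. rewrite Rmult_assoc, Rinv_l, Rmult_1_r in Hp by lra.
  assert (Hp1 : 1 < p) by nra.
  split; [exact Hp1 | split].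
  - apply Rdiv_lt_0_compat; lra.
  - apply Rmult_lt_reg_r with (p - 1); [lra |]. unfold Rdiv.
    rewrite Rmult_assoc, (Rmult_assoc (2 + alpha)), Rinv_l, Rmult_1_r by lra. nra.
Qed.

Lemma gamma_spec (N : nat) (alpha k0 p : R) : 0 < k0 -> 1 < p ->
  0 < theta alpha p * (INR N - 2 - theta alpha p) ->
  0 < gamma N alpha k0 p /\
  k0 * Rpower (gamma N alpha k0 p) (p - 1) = theta alpha p * (INR N - 2 - theta alpha p).
Proof.
  intros Hk0 Hp Hc. unfold gamma. set (c := theta alpha p * (INR N - 2 - theta alpha p)) in *.
  split; [apply Rmult_lt_0_compat; apply exp_pos |].
  rewrite <- Rpower_mult_distr, !Rpower_mult by apply exp_pos.
  replace (- (1 / (p - 1)) * (p - 1)) with (- (1)) by (field; lra).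
  replace (1 / (p - 1) * (p - 1)) with 1 by (field; lra).
  rewrite Rpower_Ropp, !Rpower_1 by lra. field. lra.
Qed.

Lemma K0_ratio_near (K : R -> R) (alpha k0 : R) : K0 K alpha k0 ->
  forall e, 0 < e -> exists d, 0 < d /\
    forall x, 0 < x < d -> Rabs (K x / Rpower x alpha - k0) < e.
Proof.
  intros [_ [_ [_ [_ Hlim]]]] e He.
  destruct (Hlim _ (locally_ball k0 (mkposreal e He))) as [d Hd].
  exists d. split; [apply cond_pos |]. intros x [Hx0 Hx1]. apply (Hd x); [| exact Hx0].
  unfold ball; simpl. unfold AbsRing_ball, abs, minus, plus, opp; simpl.
  rewrite Ropp_0, Rplus_0_r, Rabs_pos_eq; lra.
Qed.

Lemma F0_weighted_small (f : R -> R) (nu mu q : R) : F0 f nu -> 0 <= mu -> 0 < q + nu ->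
  forall e, 0 < e -> exists R, 0 < R /\
    forall x, 0 < x <= R -> 0 <= mu * (Rpower x q * f x) <= e.
Proof.
  intros [Hfpos [_ [_ [_ [C [delta [Hdelta Hbound]]]]]]] Hmu Hs e He.
  set (M := mu * Rabs C).
  assert (HM : 0 <= M) by (apply Rmult_le_pos; [lra | apply Rabs_pos]).
  set (Rf := Rpower (e / (M + 1)) (/ (q + nu))).
  assert (HRf : 0 < Rf) by apply exp_pos.
  exists (Rmin (delta / 2) Rf).
  pose proof (Rmin_l (delta / 2) Rf). pose proof (Rmin_r (delta / 2) Rf).
  split; [apply Rmin_case; lra |]. intros x Hx.
  assert (Hf0 : 0 <= f x) by (apply Hfpos; lra).
  assert (Hxq : 0 < Rpower x q) by apply exp_pos.
  split; [apply Rmult_le_pos; [lra | apply Rmult_le_pos; lra] |].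
  assert (Hfx : f x <= Rabs C * Rpower x nu).
  { eapply Rle_trans; [apply Rle_abs | eapply Rle_trans; [apply Hbound; lra |]].
    apply Rmult_le_compat_r; [left; apply exp_pos | apply Rle_abs]. }
  assert (Hpow : Rpower x (q + nu) <= e / (M + 1)).
  { replace (e / (M + 1)) with (Rpower Rf (q + nu)).
    - apply Rle_Rpower_l; lra.
    - unfold Rf. rewrite Rpower_mult, Rinv_l, Rpower_1; [reflexivity | | lra].
      apply Rdiv_lt_0_compat; lra. }
  rewrite Rpower_plus in Hpow.
  assert (mu * (Rpower x q * f x) <= M * (Rpower x q * Rpower x nu)).
  { unfold M. assert (Rpower x q * f x <= Rpower x q * (Rabs C * Rpower x nu))
      by (apply Rmult_le_compat_l; lra). nra. }
  assert (M * (e / (M + 1)) <= e).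
  { apply Rmult_le_reg_r with (M + 1); [lra |].
    replace (M * (e / (M + 1)) * (M + 1)) with (M * e) by (field; lra). nra. }
  assert (M * (Rpower x q * Rpower x nu) <= M * (e / (M + 1))) by (apply Rmult_le_compat_l; lra).
  lra.
Qed.

Lemma pospow_scaled (x z th p alpha : R) : 0 < x -> 0 < z -> th * (p - 1) = 2 + alpha ->
  Rpower x (th + 2) * pospow z p = Rpower (Rpower x th * z) p / Rpower x alpha.
Proof.
  intros Hx Hz Hth. unfold pospow. destruct (Rle_dec z 0) as [| _]; [lra |].
  rewrite <- Rpower_mult_distr, Rpower_mult by (try apply exp_pos; lra).
  unfold Rdiv. rewrite <- Rpower_Ropp.
  replace (th * p) with (th + 2 + alpha) by lra.
  rewrite !Rpower_plus.
  transitivity (Rpower x th * Rpower x 2 * Rpower z p * (Rpower x alpha * Rpower x (- alpha)));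
    [rewrite Rpower_mul_opp by lra |]; ring.
Qed.

Lemma forcing_near_pure_power (K f : R -> R) (mu alpha k0 nu th p ga : R) :
  K0 K alpha k0 -> F0 f nu -> 0 <= mu -> 0 < th -> 0 < p -> th * (p - 1) = 2 + alpha -> 0 < ga ->
  forall eps, 0 < eps -> exists R, 0 < R /\
    forall x z, 0 < x <= R -> ga / 2 <= Rpower x th * z <= 3 * ga / 2 ->
      Rabs (Rpower x (th + 2) * (K x * pospow z p + mu * f x) - k0 * Rpower (Rpower x th * z) p)
        <= eps.
Proof.
  intros HK HF Hmu Hth Hp Hrel Hga eps He.
  assert (Hnu : th + 2 + nu > 0) by (destruct HF as [_ [_ [_ [Hnu _]]]]; lra).
  set (M := Rpower (3 * ga / 2) p).
  assert (HM : 0 < M) by apply exp_pos.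
  destruct (K0_ratio_near K alpha k0 HK (eps / (2 * (1 + M)))) as [dK [HdK HK1]].
  { apply Rdiv_lt_0_compat; lra. }
  destruct (F0_weighted_small f nu mu (th + 2) HF Hmu Hnu (eps / 2)) as [Rf [HRf HF1]]; [lra |].
  exists (Rmin (dK / 2) Rf). pose proof (Rmin_l (dK / 2) Rf). pose proof (Rmin_r (dK / 2) Rf).
  split; [apply Rmin_case; lra |]. intros x z Hx Hy.
  set (y := Rpower x th * z) in *.
  assert (Hxth : 0 < Rpower x th) by apply exp_pos.
  assert (Hz : 0 < z) by (unfold y in Hy; nra).
  assert (Hyp : 0 < Rpower y p <= M) by (split; [apply exp_pos | apply Rle_Rpower_l; lra]).
  assert (HE : Rpower x (th + 2) * (K x * pospow z p + mu * f x) - k0 * Rpower y p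
               = (K x / Rpower x alpha - k0) * Rpower y p + mu * (Rpower x (th + 2) * f x)).
  { rewrite Rmult_plus_distr_l, <- Rmult_assoc, (Rmult_comm (Rpower x (th + 2))), Rmult_assoc,
      (pospow_scaled x z th p alpha) by lra.
    fold y. unfold Rdiv. ring. }
  rewrite HE. eapply Rle_trans; [apply Rabs_triang |].
  rewrite Rabs_mult, (Rabs_pos_eq (Rpower y p)) by lra.
  destruct (HF1 x ltac:(lra)) as [HF0 HFe]. rewrite (Rabs_pos_eq (mu * _)) by lra.
  assert (Hk : Rabs (K x / Rpower x alpha - k0) * Rpower y p <= eps / (2 * (1 + M)) * M).
  { pose proof (HK1 x ltac:(lra)). apply Rmult_le_compat; try lra. apply Rabs_pos. }
  assert (eps / (2 * (1 + M)) * M <= eps / 2).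
  { apply Rmult_le_reg_r with (2 * (1 + M)); [lra |].
    replace (eps / (2 * (1 + M)) * M * (2 * (1 + M))) with (eps * M) by (field; lra). nra. }
  lra.
Qed.

Theorem lemma3p6 (N : nat) (mu : R) (K f : R -> R) (alpha k0 nu p : R)
  (u : R -> R -> R) :
  (3 <= N)%nat -> 0 <= mu -> K0 K alpha k0 -> F0 f nu -> p > pS N alpha ->
  (forall zeta, 0 < zeta -> regular_solution N K f mu p (u zeta) zeta) ->
  exists eps0 C0, 0 < eps0 /\ 0 < C0 /\
  forall eps, 0 < eps <= eps0 ->
  exists rho, 0 < rho /\
  forall zeta r1, 0 < zeta -> 0 < r1 < rho ->
    Rabs (u zeta r1 - gamma N alpha k0 p * Rpower r1 (- theta alpha p))
      <= eps * Rpower r1 (- theta alpha p) ->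
    Rabs (Derive (u zeta) r1
          + theta alpha p * gamma N alpha k0 p * Rpower r1 (-1 - theta alpha p))
      <= eps * Rpower r1 (-1 - theta alpha p) ->
    Rbar_lt rho (first_zero (u zeta)) /\
    forall r, r1 < r <= rho ->
      Rabs (u zeta r - gamma N alpha k0 p * Rpower r (- theta alpha p))
        <= C0 * eps * Rpower r (- theta alpha p) /\
      Rabs (Derive (u zeta) r
            + theta alpha p * gamma N alpha k0 p * Rpower r (-1 - theta alpha p))
        <= C0 * eps * Rpower r (-1 - theta alpha p).
Proof.
  intros HN Hmu HK HF Hp Hreg.
  pose proof HK as [HKpos [HKc [Hal [Hk0 _]]]]. pose proof HF as [Hfpos [Hfc _]].
  destruct (supercritical_exponent N alpha p HN Hal Hp) as [Hp1 [Hth Hsuper]].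
  set (th := theta alpha p) in *. set (ga := gamma N alpha k0 p).
  assert (Hrel : th * (p - 1) = 2 + alpha) by (unfold th, theta; field; lra).
  assert (Hc : 0 < th * (INR N - 2 - th)) by nra.
  destruct (gamma_spec N alpha k0 p Hk0 Hp1 Hc) as [Hga Hgamma]. fold th ga in Hgamma.
  destruct (emden_fowler_stability (INR N - 2) th p k0 ga Hth Hsuper Hp1 Hk0 Hga Hgamma)
    as [eps0 [C0 [He0 [HC0 Hstab]]]].
  exists eps0, C0. split; [exact He0 | split; [exact HC0 |]]. intros eps Heps.
  destruct (forcing_near_pure_power K f mu alpha k0 nu th p ga HK HF Hmu Hth ltac:(lra) Hrel Hga
              eps ltac:(lra)) as [R [HR Hforce]].
  exists (R / 2). split; [lra |]. intros zeta r1 Hz Hr1 H1 H2.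
  destruct (regular_solution_ode N K f mu p (u zeta) zeta HN ltac:(lra) Hmu HKpos HKc Hfpos Hfc
              (Hreg zeta Hz)) as [D [HDneg [Hv HD]]].
  assert (HDer : forall r, 0 < r -> Derive (u zeta) r = D r).
  { intros r Hr. apply is_derive_unique, Hv, Hr. }
  rewrite HDer in H2 by lra.
  destruct (Hstab eps Heps (u zeta) D (fun r => K r * pospow (u zeta r) p + mu * f r) r1 R
              ltac:(lra) Hv) as [Hpos Hbounds]; auto.
  { intros x Hx. replace (INR N - 2 + 1) with (INR N - 1) by ring. apply HD, Hx. }
  split; [apply (first_zero_gt _ _ R); auto; lra |].
  intros r Hr. rewrite HDer by lra. apply Hbounds. lra.
Qed.
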